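(* A finite simple graph $G$ is chordal, claw-free, and tent-free if and only if it is strongly chordal and claw-free.
   Context: A graph is chordal if it has no induced cycle of length at least $4$. A perfect elimination order of $G$ is an ordering $v_1,\dots,v_n$ of the vertices such that whenever $v_iv_j,v_iv_k\in E(G)$ with $i<j,k$, then $v_jv_k\in E(G)$. A strong elimination order is a perfect elimination order such that whenever $v_iv_k, v_kv_j, v_iv_\ell\in E(G)$ with $i<k<\ell$ and $i<j$, then $v_jv_\ell\in E(G)$. $G$ is strongly chordal if it has a strong elimination order. The claw is $K_{1,3}$. The tent is the graph with vertices $v_1,v_2,v_3,w_1,w_2,w_3$, edges $v_1v_2,v_1v_3,v_2v_3$, and $w_1v_1,w_1v_2,w_2v_2,w_2v_3,w_3v_3,w_3v_1$. ''$H$-free'' means having no induced subgraph isomorphic to $H$. *)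

From mathcomp Require Import all_boot.
Set Implicit Arguments. Unset Strict Implicit. Unset Printing Implicit Defensive.

Definition simple_graph (T : finType) (e : rel T) : Prop :=
  symmetric e /\ irreflexive e.

Definition induced_sub (V T : finType) (h : rel V) (e : rel T) : Prop :=
  exists f : V -> T, injective f /\ forall a b, e (f a) (f b) = h a b.

Definition free_of (V T : finType) (h : rel V) (e : rel T) : Prop :=
  ~ induced_sub h e.

Definition cycle_rel (k : nat) : rel 'I_k :=
  fun i j => (j == (i.+1 %% k) :> nat) || (i == (j.+1 %% k) :> nat).

Definition chordal (T : finType) (e : rel T) : Prop :=
  forall k : nat, (4 <= k)%N -> free_of (@cycle_rel k) e.

Definition claw_rel : rel 'I_4 :=
  fun i j => ((i == 0 :> nat) && (j != 0 :> nat)) || ((j == 0 :> nat) && (i != 0 :> nat)).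

(* Tent: v1,v2,v3 = 0,1,2 (a triangle), w1,w2,w3 = 3,4,5;
   w1 ~ v1,v2 ; w2 ~ v2,v3 ; w3 ~ v3,v1. *)
Definition tent_edges : seq (nat * nat) :=
  [:: (0,1); (0,2); (1,2); (3,0); (3,1); (4,1); (4,2); (5,2); (5,0)].
Definition tent_rel : rel 'I_6 :=
  fun i j => ((i : nat, j : nat) \in tent_edges) || ((j : nat, i : nat) \in tent_edges).

Definition vertex_order (T : finType) (s : seq T) : Prop :=
  uniq s /\ forall v : T, v \in s.

Definition perfect_elim_order (T : finType) (e : rel T) (s : seq T) : Prop :=
  vertex_order s /\
  forall vi vj vk : T, index vi s < index vj s -> index vi s < index vk s ->
    e vi vj -> e vi vk -> vj != vk -> e vj vk.

Definition strong_elim_order (T : finType) (e : rel T) (s : seq T) : Prop :=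
  perfect_elim_order e s /\
  forall vi vj vk vl : T,
    index vi s < index vk s -> index vk s < index vl s -> index vi s < index vj s ->
    e vi vk -> e vk vj -> e vi vl -> vj != vl -> e vj vl.

Definition strongly_chordal (T : finType) (e : rel T) : Prop :=
  exists s : seq T, strong_elim_order e s.

From mathcomp Require Import all_boot zify.
Set Implicit Arguments. Unset Strict Implicit. Unset Printing Implicit Defensive.

(* Farber: a graph is strongly chordal iff each of its induced subgraphs has a simple vertex,
   i.e. a vertex whose neighbours have closed neighbourhoods totally ordered by inclusion.

   In a strong elimination order, the first vertex of an induced copy of a pattern graph is
   simple in the pattern; induced cycles of length >= 4 have no simplicial vertex and the tent
   has no simple vertex, so strongly chordal graphs are chordal and tent-free.

   Conversely, let G be chordal, claw-free and tent-free. By Dirac's argument on chordless paths,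
   a minimal separator S with full components A and B is a clique, and any two vertices of S
   have a common neighbour in B. Shrinking A, we may assume A :|: S is a clique; then every x in
   A is simple, because two neighbours y, z in S with incomparable neighbourhoods, together with
   x and a common neighbour of y and z in B, give a claw, a C4 or a tent. Eliminating simple
   vertices one at a time, and breaking ties between twins so as to respect the strict
   neighbourhood inclusions met so far, produces a strong elimination order. *)

Section Neighbourhoods.
Variables (T : finType) (e : rel T).

Definition nbhd (X : {set T}) x := [set y in X | e x y].
Definition cnbhd (X : {set T}) x := x |: nbhd X x.

Definition clique (C : {set T}) := forall y z, y \in C -> z \in C -> y != z -> e y z.

Definition simplicial (X : {set T}) x := clique (nbhd X x).

Definition nested (X : {set T}) y z :=
  (cnbhd X y \subset cnbhd X z) || (cnbhd X z \subset cnbhd X y).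

Definition simple (X : {set T}) x :=
  forall y z, y \in nbhd X x -> z \in nbhd X x -> nested X y z.

Lemma in_nbhd X x y : (y \in nbhd X x) = (y \in X) && e x y.
Proof. by rewrite inE. Qed.

Lemma in_nbhdT x y : (y \in nbhd setT x) = e x y.
Proof. by rewrite in_nbhd in_setT. Qed.

Lemma in_cnbhd X x y : (y \in cnbhd X x) = (y == x) || (y \in X) && e x y.
Proof. by rewrite !inE. Qed.

Lemma cnbhd_id X x : x \in cnbhd X x.
Proof. by rewrite in_cnbhd eqxx. Qed.

Lemma simple_simplicial X x : symmetric e -> simple X x -> simplicial X x.
Proof.
move=> e_sym x_simple y z xy xz yz; case/orP: (x_simple y z xy xz) => /subsetP sub.
- by move: (sub y (cnbhd_id X y)); rewrite in_cnbhd (negbTE yz) e_sym => /andP [].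
- by move: (sub z (cnbhd_id X z)); rewrite in_cnbhd eq_sym (negbTE yz) => /andP [].
Qed.

Lemma not_simple X x y z p q :
  y \in nbhd X x -> z \in nbhd X x ->
  p \in cnbhd X y -> p \notin cnbhd X z -> q \in cnbhd X z -> q \notin cnbhd X y ->
  ~ simple X x.
Proof.
move=> xy xz py pz qz qy /(_ y z xy xz); apply/negP; rewrite /nested negb_or.
by apply/andP; split; apply/subsetPn; [exists p | exists q].
Qed.

End Neighbourhoods.

Lemma cycle_rel_sym k : symmetric (@cycle_rel k).
Proof. by move=> i j; rewrite /cycle_rel orbC. Qed.

Lemma cycle_relE k (i j : 'I_k) : cycle_rel i j =
  [|| j == i.+1 :> nat, i == j.+1 :> nat,
      (i == 0 :> nat) && (j == k.-1 :> nat) | (j == 0 :> nat) && (i == k.-1 :> nat)].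
Proof.
have mod_succ x : x < k -> x.+1 %% k = if x.+1 == k then 0 else x.+1.
  by move=> lt; case: eqP => [->|ne]; [exact: modnn | apply: modn_small; lia].
rewrite /cycle_rel !mod_succ //; move: (ltn_ord i) (ltn_ord j).
by do 2 case: ifP => /eqP ?; lia.
Qed.

Lemma cycle_rel_irr k : 1 < k -> irreflexive (@cycle_rel k).
Proof. by move=> k_gt1 i; rewrite cycle_relE; lia. Qed.

Lemma cycle_not_simplicial k (a : 'I_k) : 4 <= k -> ~ simplicial (@cycle_rel k) setT a.
Proof.
move=> k_ge4 a_simpl; have a_lt := ltn_ord a.
have b_lt : (if a == 0 :> nat then k.-1 else a.-1) < k by case: eqP; lia.
have c_lt : (if a.+1 == k then 0 else a.+1) < k by case: eqP; lia.
have := a_simpl (Ordinal b_lt) (Ordinal c_lt).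
rewrite !in_nbhdT -(inj_eq val_inj) !cycle_relE /=.
by move: a_lt; do 2 case: ifP => /eqP ?; lia.
Qed.

Lemma claw_rel_sym : symmetric claw_rel.
Proof. by do 2 case=> [[|[|[|[|?]]]] ?]. Qed.

Lemma claw_rel_irr : irreflexive claw_rel.
Proof. by case=> [[|[|[|[|?]]]] ?]. Qed.

Lemma tent_rel_sym : symmetric tent_rel.
Proof. by do 2 case=> [[|[|[|[|[|[|?]]]]]] ?]. Qed.

Lemma tent_rel_irr : irreflexive tent_rel.
Proof. by case=> [[|[|[|[|[|[|?]]]]]] ?]. Qed.

Lemma tent_rel_separating (a b : 'I_6) : a != b -> exists c, tent_rel a c != tent_rel b c.
Proof.
move: a b => [[|[|[|[|[|[|?]]]]]] ?] [[|[|[|[|[|[|?]]]]]] ?] //= _;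
  first [ by exists (@Ordinal 6 0 isT) | by exists (@Ordinal 6 1 isT)
        | by exists (@Ordinal 6 2 isT) | by exists (@Ordinal 6 3 isT)
        | by exists (@Ordinal 6 4 isT) | by exists (@Ordinal 6 5 isT) ].
Qed.

Lemma tent_not_simple a : ~ simple tent_rel setT a.
Proof.
have witness b y z p q : tent_rel b y -> tent_rel b z ->
  [&& tent_rel y p, tent_rel z q, ~~ tent_rel z p, ~~ tent_rel y q, p != z & q != y] ->
  ~ simple tent_rel setT b.
  move=> b_y b_z /and4P [yp zq zp /and3P [yq pz qy]].
  apply: (@not_simple _ _ _ _ y z p q);
    by rewrite ?in_nbhdT ?in_cnbhd ?inE ?andTb ?(negbTE zp) ?(negbTE yq) ?(negbTE pz)
               ?(negbTE qy) ?yp ?zq ?orbT.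
pose v := @Ordinal 6.
case: a => [[|[|[|[|[|[|//]]]]]] a_lt]; move: (witness (Ordinal a_lt)).
- by move/(_ (v 3 isT) (v 5 isT) (v 1 isT) (v 2 isT)); apply.
- by move/(_ (v 3 isT) (v 4 isT) (v 0 isT) (v 2 isT)); apply.
- by move/(_ (v 4 isT) (v 5 isT) (v 1 isT) (v 0 isT)); apply.
- by move/(_ (v 0 isT) (v 1 isT) (v 5 isT) (v 4 isT)); apply.
- by move/(_ (v 1 isT) (v 2 isT) (v 3 isT) (v 5 isT)); apply.
- by move/(_ (v 2 isT) (v 0 isT) (v 4 isT) (v 3 isT)); apply.
Qed.

Section EliminationOrders.
Variables (T : finType) (e : rel T) (s : seq T).
Variables (V : finType) (h : rel V) (f : V -> T).
Hypothesis f_inj : injective f.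
Hypothesis f_induced : forall a b, e (f a) (f b) = h a b.

Lemma vertex_order_index_inj : vertex_order s -> injective (fun a => index (f a) s).
Proof. by move=> [_ s_all] a b /(index_inj (f a) (s_all _) (s_all _)) /f_inj. Qed.

Lemma vertex_order_first (a0 : V) : vertex_order s ->
  exists a, forall b, b != a -> index (f a) s < index (f b) s.
Proof.
move=> s_ord; exists [arg min_(a < a0) index (f a) s] => b.
case: arg_minnP => // a _ a_min b_a.
rewrite ltn_neqAle a_min // andbT; apply: contra b_a => /eqP.
by rewrite eq_sym => /(vertex_order_index_inj s_ord) ->.
Qed.

Hypothesis h_irr : irreflexive h.

Let h_neq a y : h a y -> y != a.
Proof. by apply: contraTneq => ->; rewrite h_irr. Qed.

Lemma peo_induced_simplicial (a0 : V) : perfect_elim_order e s ->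
  exists a, simplicial h setT a.
Proof.
move=> [s_ord peo]; have [a a_first] := vertex_order_first a0 s_ord.
exists a => y z; rewrite !in_nbhdT => ay az yz; rewrite -f_induced.
apply: (peo (f a)); rewrite ?a_first ?(h_neq ay) ?(h_neq az) ?f_induced //.
by apply: contra yz => /eqP /f_inj ->.
Qed.

Hypothesis h_sym : symmetric h.

Lemma strong_elim_induced_simple (a0 : V) : strong_elim_order e s ->
  exists a, simple h setT a.
Proof.
move=> [[s_ord peo] strong]; have [a a_first] := vertex_order_first a0 s_ord.
have nested_lt y z : h a y -> h a z -> index (f y) s < index (f z) s ->
    cnbhd h setT y \subset cnbhd h setT z.
  move=> ay az yz; have ya := h_neq ay; have za := h_neq az.
  apply/subsetP => w; rewrite !in_cnbhd !inE /= => /predU1P [->|yw].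
  have yz' : y != z by apply: contraTneq yz => ->; rewrite ltnn.
  rewrite orbC h_sym -f_induced (peo (f a)) ?a_first ?f_induced //.
    by apply: contra yz' => /eqP /f_inj ->.
  have [->|wz] := eqVneq w z; first by [].
  have [->|wa] := eqVneq w a; first by rewrite h_sym az.
  rewrite /= h_sym -f_induced (strong (f a) _ (f y)) ?a_first ?f_induced //.
  by apply: contra wz => /eqP /f_inj ->.
exists a => y z; rewrite !in_nbhdT => ay az.
have [<-|y_z] := eqVneq y z; first by rewrite /nested subxx.
have /orP [yz|zy] : (index (f y) s < index (f z) s) || (index (f z) s < index (f y) s).
  by rewrite -neq_ltn; apply: contra y_z => /eqP /(vertex_order_index_inj s_ord) ->.
- by rewrite /nested nested_lt.
- by rewrite /nested (nested_lt z y) ?orbT.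
Qed.

End EliminationOrders.

Lemma peo_chordal (T : finType) (e : rel T) s : perfect_elim_order e s -> chordal e.
Proof.
move=> peo k k_ge4 [f [f_inj f_induced]].
have [k_gt1 k_gt0] : 1 < k /\ 0 < k by lia.
have [a] := peo_induced_simplicial f_inj f_induced (cycle_rel_irr k_gt1) (Ordinal k_gt0) peo.
exact: cycle_not_simplicial.
Qed.

Lemma strong_elim_tent_free (T : finType) (e : rel T) s :
  strong_elim_order e s -> free_of tent_rel e.
Proof.
move=> strong [f [f_inj f_induced]].
have [a] := strong_elim_induced_simple f_inj f_induced tent_rel_irr tent_rel_sym
  (@Ordinal 6 0 isT) strong.
exact: tent_not_simple.
Qed.

Section InducedPatterns.
Variables (T : finType) (e : rel T).
Hypotheses (e_sym : symmetric e) (e_irr : irreflexive e).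

Lemma adj_neq x y : e x y -> x != y.
Proof. by apply: contraTneq => ->; rewrite e_irr. Qed.

Section Tables.
Variables (n : nat) (h : rel 'I_n) (f : 'I_n -> T).
Hypotheses (h_sym : symmetric h) (h_irr : irreflexive h).
Hypothesis f_table : forall a b : 'I_n, a < b -> e (f a) (f b) = h a b.

Lemma table_full a b : e (f a) (f b) = h a b.
Proof.
case: (ltngtP a b) => [|ba|/val_inj ->]; [exact: f_table | | by rewrite e_irr h_irr].
by rewrite e_sym h_sym f_table.
Qed.

Lemma induced_sub_table : (forall a b : 'I_n, a < b -> f a != f b) -> induced_sub h e.
Proof.
move=> f_neq; exists f; split; last exact: table_full.
move=> a b fab; case: (ltngtP a b) => [ab|ba|/val_inj //].
- by move: (f_neq a b ab); rewrite fab eqxx.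
- by move: (f_neq b a ba); rewrite fab eqxx.
Qed.

Lemma induced_sub_separating : (forall a b : 'I_n, a != b -> exists c, h a c != h b c) ->
  induced_sub h e.
Proof.
move=> h_sep; apply: induced_sub_table => a b ab; apply/eqP => fab.
have [|c] := h_sep a b; first by rewrite neq_ltn ab.
by rewrite -!table_full fab eqxx.
Qed.

End Tables.

Lemma no_induced_claw c l1 l2 l3 : free_of claw_rel e ->
  e c l1 -> e c l2 -> e c l3 -> ~~ e l1 l2 -> ~~ e l1 l3 -> ~~ e l2 l3 ->
  l1 != l2 -> l1 != l3 -> l2 != l3 -> False.
Proof.
move=> claw_free c1 c2 c3 n12 n13 n23 d12 d13 d23; apply: claw_free.
have d1 := adj_neq c1; have d2 := adj_neq c2; have d3 := adj_neq c3.
apply: (@induced_sub_table 4 _ (fun a => nth c [:: c; l1; l2; l3] a) claw_rel_sym claw_rel_irr).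
- move=> [[|[|[|[|?]]]] ?] [[|[|[|[|?]]]] ?] //= _;
    by rewrite ?(negbTE n12) ?(negbTE n13) ?(negbTE n23).
- by move=> [[|[|[|[|?]]]] ?] [[|[|[|[|?]]]] ?].
Qed.

Lemma no_induced_cycle (k : nat) (c : nat -> T) : chordal e -> 4 <= k ->
  (forall i j, i < j < k -> c i != c j) ->
  (forall i j, i < j < k -> e (c i) (c j) = (j == i.+1) || (i == 0) && (j == k.-1)) ->
  False.
Proof.
move=> chordal_e k_ge4 c_neq c_adj; apply: (chordal_e k k_ge4).
apply: (induced_sub_table (f := fun a : 'I_k => c a) (@cycle_rel_sym k)).
- by apply: cycle_rel_irr; lia.
- by move=> a b ab; rewrite c_adj ?ab ?ltn_ord // cycle_relE; move: (ltn_ord b); lia.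
- by move=> a b ab; apply: c_neq; rewrite ab ltn_ord.
Qed.

Lemma no_induced_c4 x1 x2 x3 x4 : chordal e ->
  e x1 x2 -> e x2 x3 -> e x3 x4 -> e x4 x1 -> ~~ e x1 x3 -> ~~ e x2 x4 ->
  x1 != x3 -> x2 != x4 -> False.
Proof.
move=> chordal_e e12 e23 e34 e41 n13 n24 d13 d24.
have d12 := adj_neq e12; have d23 := adj_neq e23; have d34 := adj_neq e34.
have d14 : x1 != x4 by rewrite eq_sym adj_neq.
apply: (@no_induced_cycle 4 (nth x1 [:: x1; x2; x3; x4]) chordal_e) => //.
- by move=> [|[|[|[|i]]]] [|[|[|[|j]]]] /andP [].
- move=> [|[|[|[|i]]]] [|[|[|[|j]]]] /andP [] //= _ _.
  all: by rewrite ?(negbTE n13) ?(negbTE n24) // e_sym.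
Qed.

Lemma no_induced_tent v1 v2 v3 w1 w2 w3 : free_of tent_rel e ->
  e v1 v2 -> e v1 v3 -> e v2 v3 ->
  e w1 v1 -> e w1 v2 -> e w2 v2 -> e w2 v3 -> e w3 v3 -> e w3 v1 ->
  ~~ e w1 v3 -> ~~ e w2 v1 -> ~~ e w3 v2 -> ~~ e w1 w2 -> ~~ e w1 w3 -> ~~ e w2 w3 -> False.
Proof.
move=> tent_free e12 e13 e23 f11 f12 f22 f23 f33 f31 n13 n21 n32 m12 m13 m23.
apply: tent_free; apply: (@induced_sub_separating 6 _ (nth v1 [:: v1; v2; v3; w1; w2; w3]))
  tent_rel_sym tent_rel_irr _ tent_rel_separating.
move=> [[|[|[|[|[|[|?]]]]]] ?] [[|[|[|[|[|[|?]]]]]] ?] //= _.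
all: first [ by [] | rewrite e_sym; by []
           | apply: negbTE; by [] | apply: negbTE; by rewrite e_sym ].
Qed.

End InducedPatterns.

Section Walks.
Variables (T : finType) (e : rel T).
Hypotheses (e_sym : symmetric e) (e_irr : irreflexive e).
Implicit Types (D : {set T}) (g : nat -> T).

Definition adj_in (D : {set T}) : rel T := fun x y => [&& x \in D, y \in D & e x y].

Definition linked (D : {set T}) : rel T := connect (adj_in D).

Lemma linked_sym D : symmetric (linked D).
Proof.
apply: sym_connect_sym => x y.
by rewrite /adj_in e_sym andbA [(x \in D) && _]andbC -andbA.
Qed.

Lemma linked_step D u y z : linked D u y -> y \in D -> z \in D -> e y z -> linked D u z.
Proof. by move=> uy yD zD yz; apply: connect_trans uy (connect1 _); rewrite /adj_in yD zD. Qed.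

Lemma linked_ind D u (P : T -> Prop) : P u ->
  (forall y z, P y -> linked D u y -> y \in D -> z \in D -> e y z -> P z) ->
  forall w, linked D u w -> P w.
Proof.
move=> Pu P_step w /connectP [p u_p ->].
suff walk x : P x -> linked D u x -> path (adj_in D) x p -> P (last x p).
  exact: walk Pu (connect0 _ _) u_p.
clear u_p; elim: p x => [|y p IH] x //= Px ux /andP [/[dup] xy /and3P [xD yD exy] y_p].
by apply: IH y_p; [exact: P_step Px ux xD yD exy | exact: linked_step ux xD yD exy].
Qed.

Lemma linked_mem D a w : a \in D -> linked D a w -> w \in D.
Proof. by move=> aD; apply: (linked_ind (P := fun w => w \in D)). Qed.

Definition walk_in (D : {set T}) (g : nat -> T) k :=
  (forall i, i < k -> e (g i) (g i.+1)) /\ (forall i, 0 < i < k -> g i \in D).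

Definition chordless (g : nat -> T) k :=
  forall i j, i.+1 < j <= k -> e (g i) (g j) -> (i == 0) && (j == k).

Lemma walk_in_rcons D g k z : walk_in D g k -> g k \in D -> e (g k) z ->
  walk_in D (fun i => if i <= k then g i else z) k.+1.
Proof.
move=> [g_adj g_in] gkD gkz; split=> i.
- case: (ltngtP i k) => [lt|gt|->] ik; last by [].
  + exact: g_adj.
  + lia.
- case: (ltngtP i k) => [lt|gt|->] /andP [i_gt0 ik] //.
  + by apply: g_in; rewrite i_gt0.
  + lia.
Qed.

Lemma linked_walk D s t a b : a \in D -> e s a -> linked D a b -> e b t ->
  exists k g, [/\ 1 < k, walk_in D g k, g 0 = s & g k = t].
Proof.
move=> aD sa ab bt.
pose P w := exists k g, [/\ 0 < k, walk_in D g k, g 0 = s & g k = w].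
have [k [g [k_gt0 g_walk g0 gk]]] : P b.
  apply: (linked_ind (P := P)) ab.
    exists 1, (fun i => if i is 0 then s else a); split=> //.
    by split=> [[|[]] //|[|[]]].
  move=> y z [k [g [k_gt0 g_walk g0 gk]]] _ yD zD yz.
  exists k.+1, (fun i => if i <= k then g i else z); split=> //.
  - by apply: walk_in_rcons; rewrite // gk.
  - by rewrite ltnn.
exists k.+1, (fun i => if i <= k then g i else t); split=> //.
- by apply: walk_in_rcons; rewrite // gk ?(linked_mem aD ab).
- by rewrite ltnn.
Qed.

Lemma walk_shorten D k g : 1 < k -> walk_in D g k ->
  exists k' g', [/\ 1 < k', walk_in D g' k', g' 0 = g 0, g' k' = g k & chordless g' k'].
Proof.
elim/ltn_ind: k g => k IH g k_gt1 [g_adj g_in].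
have [|no_chord] := boolP [exists i : 'I_k.+1, exists j : 'I_k.+1,
  [&& i.+1 < j, e (g i) (g j) & ~~ ((i == 0 :> nat) && (j == k :> nat))]]; last first.
  exists k, g; split=> // i j /andP [ij jk] gij; apply: contraNT no_chord => ends.
  have [ik j_lt] : i < k.+1 /\ j < k.+1 by lia.
  by apply/existsP; exists (Ordinal ik); apply/existsP; exists (Ordinal j_lt); rewrite /= ij gij.
case/existsP => [[i ik]] /existsP [[j jk]] /= /and3P [ij gij not_ends].
pose d := j - i.+1.
pose g' l := if l <= i then g l else g (l + d).
have [|||k' [g'' [k'_gt1 g''_walk g''0 g''k' g''_chordless]]] := IH (k - d) _ g'.
- lia.
- by move: not_ends; rewrite negb_and => /orP [] /eqP; lia.
- split=> l l_lt; rewrite /g'.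
  + case: (ltngtP l i) => [li|il|->]; first by apply: g_adj; lia.
    * by rewrite (_ : l.+1 + d = (l + d).+1); [apply: g_adj|]; lia.
    * by rewrite (_ : i.+1 + d = j) //; lia.
  + by case: ifP => _; apply: g_in; lia.
- exists k', g''; split=> //; rewrite g''k' /g' ifN; first by congr g; lia.
  by move: not_ends; rewrite negb_and => /orP [] /eqP; lia.
Qed.

Lemma linked_chordless_walk D s t a b : a \in D -> e s a -> linked D a b -> e b t ->
  exists k g, [/\ 1 < k, walk_in D g k, g 0 = s, g k = t & chordless g k].
Proof.
move=> aD sa ab bt; have [k [g [k_gt1 g_walk <- <-]]] := linked_walk aD sa ab bt.
have [k' [g' [k'_gt1 g'_walk <- <- g'_chordless]]] := walk_shorten k_gt1 g_walk.
by exists k', g'.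
Qed.

Lemma chordless_walk_neq D k g : walk_in D g k -> chordless g k ->
  g 0 \notin D -> g k \notin D -> g 0 != g k -> forall i j, i < j <= k -> g i != g j.
Proof.
move=> [g_adj g_in] g_chordless g0D gkD g0k i j /andP [ij jk]; apply/eqP => gij.
have [i0|i_gt0] := posnP i.
  move: ij jk gij; rewrite i0 => j_gt0; rewrite leq_eqVlt => /predU1P [->|jk] g0j.
    by rewrite g0j eqxx in g0k.
  by move: g0D; rewrite g0j g_in ?j_gt0.
have iD : g i \in D by apply: g_in; lia.
move: jk; rewrite leq_eqVlt => /predU1P [jk|jk]; first by move: gkD; rewrite -jk -gij iD.
have [ji|ji] := eqVneq j i.+1; first by move: (g_adj i (ltn_trans ij jk)); rewrite -ji -gij e_irr.
have e_ij1 : e (g i) (g j.+1) by rewrite gij g_adj.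
by have := g_chordless i j.+1; rewrite ltnS ij jk => /(_ isT e_ij1) /andP [/eqP]; lia.
Qed.

Lemma chordless_cycle k g : chordal e -> 2 < k ->
  (forall i, i < k -> e (g i) (g i.+1)) -> chordless g k ->
  (forall i j, i < j <= k -> g i != g j) -> e (g 0) (g k) -> False.
Proof.
move=> chordal_e k_gt2 g_adj g_chordless g_neq g0k.
apply: (@no_induced_cycle _ e e_sym e_irr k.+1 g chordal_e) => [|i j ij|i j /andP [ij jk]].
- lia.
- by apply: g_neq; lia.
- have [->|ji] := eqVneq j i.+1; first by rewrite g_adj ?eqxx //; lia.
  case: (boolP ((i == 0) && (j == k))) => [/andP [/eqP -> /eqP ->] //|not_ends].
  by rewrite orbF; apply: contraNF not_ends; apply: g_chordless; lia.
Qed.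

(* Two chordless walks s ~> t through D1 and t ~> s through D2 glue to an induced cycle. *)
Section Gluing.
Variables (D1 D2 : {set T}) (s t : T) (g h : nat -> T) (m n : nat).
Hypotheses (g_walk : walk_in D1 g m) (g_chordless : chordless g m) (g0 : g 0 = s) (gm : g m = t).
Hypotheses (h_walk : walk_in D2 h n) (h_chordless : chordless h n) (h0 : h 0 = t) (hn : h n = s).
Hypotheses (m_gt1 : 1 < m) (n_gt1 : 1 < n) (s_t : s != t) (st : ~~ e s t).
Hypotheses (sD1 : s \notin D1) (sD2 : s \notin D2) (tD1 : t \notin D1) (tD2 : t \notin D2).
Hypotheses (D12 : [disjoint D1 & D2]) (no_edge12 : forall x y, x \in D1 -> y \in D2 -> ~~ e x y).

Let glued i := if i <= m then g i else h (i - m).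

Let glued_g i : i <= m -> glued i = g i.
Proof. by rewrite /glued => ->. Qed.

Let glued_h i : m <= i -> glued i = h (i - m).
Proof.
by rewrite /glued leq_eqVlt => /predU1P [<-|/ltn_geF ->]; rewrite ?leqnn ?subnn ?gm ?h0.
Qed.

Let g_neq : forall i j, i < j <= m -> g i != g j.
Proof. by apply: (chordless_walk_neq g_walk); rewrite ?g0 ?gm. Qed.

Let h_neq : forall i j, i < j <= n -> h i != h j.
Proof. by apply: (chordless_walk_neq h_walk); rewrite ?h0 ?hn // eq_sym. Qed.

Let glued_neq i j : i < j < m + n -> glued i != glued j.
Proof.
move=> /andP [ij j_lt]; case: (leqP j m) => [jm|mj].
  by rewrite !glued_g ?g_neq ?ij //; lia.
case: (leqP m i) => [mi|im].
  by rewrite !glued_h ?h_neq //; lia.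
have hjD2 : h (j - m) \in D2 by case: h_walk => _; apply; lia.
rewrite glued_g ?glued_h; try lia.
have [->|i_gt0] := posnP i; first by rewrite g0; apply: contraNneq sD2 => ->.
have giD1 : g i \in D1 by case: g_walk => _; apply; lia.
by apply: contraTneq giD1 => ->; rewrite (disjointFl D12 hjD2).
Qed.

Let glued_adj i j : i < j < m + n ->
  e (glued i) (glued j) = (j == i.+1) || (i == 0) && (j == (m + n).-1).
Proof.
move=> /andP [ij j_lt]; case: (leqP j m) => [jm|mj].
  rewrite !glued_g; try lia.
  have [->|ji] := eqVneq j i.+1; first by case: g_walk => g_adj _; rewrite g_adj //; lia.
  have -> : (j == (m + n).-1) = false by apply/eqP; lia.
  rewrite andbF; apply/negbTE; apply: contraNN st => gij.
  by have /andP [/eqP i0 /eqP jm'] := @g_chordless i j (ltac:(lia)) gij; rewrite -g0 -gm -i0 -jm'.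
case: (leqP m i) => [mi|im].
  rewrite !glued_h; try lia.
  have -> : (i == 0) = false by apply/eqP; lia.
  rewrite andFb orbF; have [->|ji] := eqVneq j i.+1.
    by case: h_walk => h_adj _; rewrite subSn ?h_adj //; lia.
  apply/negbTE/negP => hij.
  by have /andP [_ /eqP] := @h_chordless (i - m) (j - m) (ltac:(lia)) hij; lia.
rewrite glued_g ?glued_h; try lia.
have -> : (j == i.+1) = false by apply/eqP; lia.
have hjD2 : h (j - m) \in D2 by case: h_walk => _; apply; lia.
have [i0|i_gt0] := posnP i; last first.
  by apply/negbTE/no_edge12 => //; case: g_walk => _; apply; lia.
rewrite i0 g0 -hn e_sym /=; have [jn|jn] := eqVneq j (m + n).-1.
  by case: h_walk => h_adj _; rewrite (_ : n = (j - m).+1) ?h_adj //; lia.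
apply/negbTE/negP => hjn.
by have /andP [/eqP] := @h_chordless (j - m) n (ltac:(lia)) hjn; lia.
Qed.

Lemma glued_cycle_false : chordal e -> False.
Proof.
move=> chordal_e.
apply: (@no_induced_cycle _ e e_sym e_irr (m + n) glued chordal_e) => [||i j ij].
- lia.
- exact: glued_neq.
- exact: glued_adj.
Qed.

End Gluing.

End Walks.

Section MinimalSeparators.
Variables (T : finType) (e : rel T).
Hypotheses (e_sym : symmetric e) (e_irr : irreflexive e).
Implicit Types (X Y S A B : {set T}).

(* [S] separates [X] into components [A] and [B] of [X :\: S] that are full: every vertex of [S]
   has a neighbour in each of them, which makes [S] a minimal separator. *)
Record minimal_separator X S A B : Prop := {
  msep_sub : S \subset X;
  msepA_sub : A \subset X :\: S;
  msepB_sub : B \subset X :\: S;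
  msep_disjoint : [disjoint A & B];
  msepA_closed : forall a y, a \in A -> y \in X -> e a y -> y \in A :|: S;
  msepB_closed : forall b y, b \in B -> y \in X -> e b y -> y \in B :|: S;
  msepA_linked : forall a b, a \in A -> b \in A -> linked e A a b;
  msepB_linked : forall a b, a \in B -> b \in B -> linked e B a b;
  msepA_full : forall s, s \in S -> exists2 a, a \in A & e s a;
  msepB_full : forall s, s \in S -> exists2 b, b \in B & e s b
}.

Lemma minimal_separator_sym X S A B : minimal_separator X S A B -> minimal_separator X S B A.
Proof. by case=> *; split; rewrite 1?disjoint_sym. Qed.

Definition separates X S u v :=
  [&& S \subset X, u \notin S, v \notin S & ~~ linked e (X :\: S) u v].

Definition component Y u := [set y | linked e Y u y].

Lemma separates_sym X S u v : separates X S u v = separates X S v u.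
Proof. by rewrite /separates (linked_sym e_sym); case: (S \subset X); rewrite //= andbCA. Qed.

Lemma component_sub Y u : u \in Y -> component Y u \subset Y.
Proof. by move=> uY; apply/subsetP => y; rewrite inE; exact: linked_mem uY. Qed.

Lemma component_closed Y u a y : u \in Y -> a \in component Y u -> y \in Y -> e a y ->
  y \in component Y u.
Proof.
move=> uY aC yY ay; have aY := subsetP (component_sub uY) a aC.
by move: aC; rewrite !inE => ua; apply: linked_step ua aY yY ay.
Qed.

Lemma component_linked Y u a b : u \in Y -> a \in component Y u -> b \in component Y u ->
  linked e (component Y u) a b.
Proof.
move=> uY; rewrite !inE => ua ub.
have ab : linked e Y a b := connect_trans (etrans (linked_sym e_sym Y a u) ua) ub.
suff [] : linked e Y u b /\ linked e (component Y u) a b by [].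
apply: (linked_ind (P := fun z => linked e Y u z /\ linked e (component Y u) a z)) ab.
  by split; [|exact: connect0].
move=> y z [uy ay] _ yY zY yz; have uz := linked_step uy yY zY yz.
by split; last by apply: linked_step ay _ _ yz; rewrite inE.
Qed.

Lemma separator_full X S u v s : u \in X -> separates X S u v ->
  (forall S', separates X S' u v -> #|S| <= #|S'|) -> s \in S ->
  exists2 a, a \in component (X :\: S) u & e s a.
Proof.
move=> uX /and4P [SX uS vS not_uv] S_min sS.
have [/existsP [a /andP [aC sa]]|no_nbr] := boolP [exists a in component (X :\: S) u, e s a].
  by exists a.
have uY : u \in X :\: S by rewrite inE uS.
suff : separates X (S :\ s) u v by move/S_min; rewrite (cardsD1 s S) sS ltnn.
apply/and4P; split; rewrite ?subDset ?subsetU ?SX ?orbT ?inE ?negb_and ?uS ?vS ?orbT //.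
apply: contra not_uv; apply: (linked_ind (P := linked e (X :\: S) u)); first exact: connect0.
move=> y z uy _ yY zY yz; apply: (linked_step uy _ _ yz); first exact: linked_mem uY uy.
move: zY; rewrite !inE negb_and negbK => /andP [/orP [/eqP zs|->] ->] //.
by case/negP: no_nbr; apply/existsP; exists y; rewrite -zs e_sym yz andbT inE.
Qed.

Lemma msepA_mem X S A B a : minimal_separator X S A B -> a \in A -> (a \in X) && (a \notin S).
Proof. by move=> msep /(subsetP (msepA_sub msep)); rewrite inE andbC. Qed.

Lemma msepS_notinA X S A B s : minimal_separator X S A B -> s \in S -> s \notin A.
Proof. by move=> msep sS; apply/negP => /(msepA_mem msep); rewrite sS andbF. Qed.

Lemma msep_AS_sub X S A B : minimal_separator X S A B -> A :|: S \subset X.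
Proof.
by move=> msep; rewrite subUset (msep_sub msep) (subset_trans (msepA_sub msep)) ?subsetDl.
Qed.

Lemma msep_no_edge X S A B a b : minimal_separator X S A B -> a \in A -> b \in B -> ~~ e a b.
Proof.
move=> msep aA bB; apply/negP => ab.
have /andP [bX bS] := msepA_mem (minimal_separator_sym msep) bB.
have := msepA_closed msep aA bX ab.
by rewrite inE (negbTE bS) orbF (disjointFl (msep_disjoint msep) bB).
Qed.

Lemma exists_minimal_separator X u v : u \in X -> v \in X -> u != v -> ~~ e u v ->
  exists S, minimal_separator X S (component (X :\: S) u) (component (X :\: S) v).
Proof.
move=> uX vX uv not_euv.
have uv_sep : separates X (X :\: [set u; v]) u v.
  rewrite /separates subsetDl !inE !eqxx orbT /=; apply: contra uv => linked_uv.
  rewrite eq_sym; apply: (linked_ind (P := fun z => z == u)) linked_uv => // y z /eqP -> _ _.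
  move=> /setDP [zX]; rewrite inE zX andbT negbK !inE => /orP [/eqP -> //|/eqP ->].
  by rewrite (negbTE not_euv).
case: (@arg_minnP _ _ (fun S => separates X S u v) (fun S => #|S|) uv_sep) => S S_sep S_min.
have /and4P [SX uS vS not_uv] := S_sep.
have [uY vY] : u \in X :\: S /\ v \in X :\: S by rewrite !inE uS vS.
have closed w a y : w \in X :\: S -> a \in component (X :\: S) w -> y \in X -> e a y ->
    y \in component (X :\: S) w :|: S.
  move=> wY aC yX ay; rewrite inE; have [|yS] := boolP (y \in S); rewrite ?orbT ?orbF //.
  by apply: component_closed wY aC _ ay; rewrite inE yS.
exists S; split=> //.
- exact: component_sub.
- exact: component_sub.
- rewrite disjoints_subset; apply/subsetP => y; rewrite !inE => uy.
  apply: contra not_uv => vy; apply: connect_trans uy _.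
  by rewrite -/(linked e _ y v) linked_sym.
- by move=> a y; apply: closed.
- by move=> a y; apply: closed.
- by move=> a b; apply: component_linked.
- by move=> a b; apply: component_linked.
- by move=> s; apply: (separator_full (v := v)).
- move=> s; apply: (separator_full (v := u)); rewrite // 1?separates_sym //.
  by move=> S'; rewrite separates_sym; apply: S_min.
Qed.

Lemma msep_walk X S A B s t : minimal_separator X S A B -> s \in S -> t \in S ->
  exists k g, [/\ 1 < k, walk_in e A g k, g 0 = s, g k = t & chordless e g k].
Proof.
move=> msep sS tS; have [a aA sa] := msepA_full msep sS; have [b bA tb] := msepA_full msep tS.
by apply: (linked_chordless_walk aA sa (msepA_linked msep aA bA)); rewrite e_sym.
Qed.

Hypothesis chordal_e : chordal e.

Lemma msep_clique X S A B : minimal_separator X S A B -> clique e S.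
Proof.
move=> msep s t sS tS st; apply/negPn/negP => nst.
have msep' := minimal_separator_sym msep.
have [m [g [m_gt1 g_walk g0 gm g_chordless]]] := msep_walk msep sS tS.
have [n [h [n_gt1 h_walk h0 hn h_chordless]]] := msep_walk msep' tS sS.
apply: (glued_cycle_false e_sym e_irr g_walk g_chordless g0 gm h_walk h_chordless h0 hn) => //.
- exact: msepS_notinA msep sS.
- exact: msepS_notinA msep' sS.
- exact: msepS_notinA msep tS.
- exact: msepS_notinA msep' tS.
- exact: msep_disjoint msep.
- by move=> x y; apply: msep_no_edge msep.
Qed.

Lemma msep_common_nbr X S A B s t : minimal_separator X S A B -> s \in S -> t \in S -> s != t ->
  exists2 r, r \in A & e s r && e t r.
Proof.
move=> msep sS tS st.
have [k [g [k_gt1 [g_adj g_in] g0 gk g_chordless]]] := msep_walk msep sS tS.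
have [k_gt2|k_le2] := ltnP 2 k.
  have g_neq := chordless_walk_neq e_irr (conj g_adj g_in) g_chordless.
  case: (chordless_cycle e_sym e_irr chordal_e k_gt2 g_adj g_chordless); last first.
    by rewrite g0 gk (msep_clique msep).
  by apply: g_neq; rewrite ?g0 ?gk ?(msepS_notinA msep).
exists (g 1); first by apply: g_in; lia.
have k2 : k = 2 by lia.
by apply/andP; split; [rewrite -g0 | rewrite -gk k2 e_sym]; apply: g_adj; lia.
Qed.

End MinimalSeparators.

Section SimpleVertices.
Variables (T : finType) (e : rel T).
Hypotheses (e_sym : symmetric e) (e_irr : irreflexive e).
Hypothesis chordal_e : chordal e.
Hypotheses (claw_free : free_of claw_rel e) (tent_free : free_of tent_rel e).
Implicit Types (X S A B C : {set T}).

Lemma clique_cnbhd X C z : C \subset X -> clique e C -> z \in C -> C \subset cnbhd e X z.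
Proof.
move=> CX C_clique zC; apply/subsetP => w wC; rewrite in_cnbhd (subsetP CX) //.
by have [//|wz] := eqVneq w z; rewrite C_clique // eq_sym.
Qed.

(* [y] and [z] are adjacent with common neighbours [x] and [r], while [p] (resp. [q]) is a
   neighbour of [y] only (resp. [z] only) and [x] sees none of [p], [q], [r]: the claw forces
   [p ~ r] and [q ~ r], a C4 forbids [p ~ q], and then [y, z, r, x, q, p] is a tent. *)
Lemma private_neighbours_false x y z p q r :
  e y z -> e x y -> e x z -> e y p -> e z q -> e y r -> e z r ->
  ~~ e z p -> ~~ e y q -> ~~ e x p -> ~~ e x q -> ~~ e x r -> x != r -> False.
Proof.
move=> yz xy xz yp zq yr zr nzp nyq nxp nxq nxr xr.
have neq u v w : e u v -> ~~ e u w -> v != w by move=> uv; apply: contraNneq => <-.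
have xp : x != p by rewrite (neq z) // e_sym.
have xq : x != q by rewrite (neq y) // e_sym.
have pr : p != r by rewrite eq_sym (neq z).
have qr : q != r by rewrite eq_sym (neq y).
have yx : e y x by rewrite e_sym.
have zx : e z x by rewrite e_sym.
have pr_adj : e p r.
  apply/negPn/negP => npr; exact: (no_induced_claw e_sym e_irr claw_free yx yp yr nxp nxr npr).
have qr_adj : e q r.
  apply/negPn/negP => nqr; exact: (no_induced_claw e_sym e_irr claw_free zx zq zr nxq nxr nqr).
have nqp : ~~ e q p.
  apply/negP => qp; apply: (no_induced_c4 e_sym e_irr chordal_e yp _ _ _ nyq (x4 := z)).
  1-4: by rewrite e_sym.
  - exact: neq xy nxq.
  - by rewrite eq_sym (neq x).
apply: (no_induced_tent e_sym e_irr tent_free yz yr zr xy xz _ qr_adj pr_adj _ nxr _ _ nxq nxp nqp).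
all: by rewrite e_sym.
Qed.

Lemma msep_nested X S A B x y z : minimal_separator e X S A B -> clique e (A :|: S) ->
  x \in A -> y \in S -> z \in S -> y != z -> nested e X y z.
Proof.
move=> msep AS_clique xA yS zS yz; apply/negPn/negP; rewrite negb_or.
case/andP => /subsetPn [p py pz] /subsetPn [q qz qy].
have ASX := msep_AS_sub msep.
have yA := msepS_notinA msep yS; have zA := msepS_notinA msep zS.
have [xAS yAS zAS] : [/\ x \in A :|: S, y \in A :|: S & z \in A :|: S].
  by split; rewrite inE ?xA ?yS ?zS ?orbT.
have AS_y := clique_cnbhd ASX AS_clique yAS; have AS_z := clique_cnbhd ASX AS_clique zAS.
have pAS : p \notin A :|: S by apply: contra pz => /(subsetP AS_z).
have qAS : q \notin A :|: S by apply: contra qy => /(subsetP AS_y).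
have nbr_of v w : w \in cnbhd e X v -> w \notin A :|: S -> v \in A :|: S -> w \in X /\ e v w.
  by rewrite in_cnbhd => /predU1P [-> /negP //|/andP []].
have [pX yp] := nbr_of _ _ py pAS yAS; have [qX zq] := nbr_of _ _ qz qAS zAS.
have [r rB /andP [yr zr]] :=
  msep_common_nbr e_sym e_irr chordal_e (minimal_separator_sym msep) yS zS yz.
have /andP [rX rS] := msepA_mem (minimal_separator_sym msep) rB.
have rAS : r \notin A :|: S by rewrite inE negb_or rS (disjointFl (msep_disjoint msep) rB).
apply: (private_neighbours_false (x := x) (p := p) (q := q) (r := r) _ _ _ yp zq yr zr).
- by apply: AS_clique.
- by apply: AS_clique => //; apply: contraNneq yA => <-.
- by apply: AS_clique => //; apply: contraNneq zA => <-.
- by move: pz; rewrite in_cnbhd pX negb_or => /andP [].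
- by move: qy; rewrite in_cnbhd qX negb_or => /andP [].
- by apply: contra pAS; exact: (msepA_closed msep xA pX).
- by apply: contra qAS; exact: (msepA_closed msep xA qX).
- exact: msep_no_edge msep xA rB.
- by apply: contraNneq rAS => <-.
Qed.

Lemma msep_simple_of_clique X S A B x : minimal_separator e X S A B -> clique e (A :|: S) ->
  x \in A -> simple e X x.
Proof.
move=> msep AS_clique xA.
have ASX := msep_AS_sub msep.
have A_cnbhd a : a \in A -> cnbhd e X a \subset A :|: S.
  move=> aA; apply/subsetP => w; rewrite in_cnbhd => /predU1P [->|/andP [wX aw]].
    by rewrite inE aA.
  exact: (msepA_closed msep aA wX aw).
have nbhd_AS w : w \in nbhd e X x -> w \in A :|: S.
  by rewrite in_nbhd => /andP [wX xw]; apply: (msepA_closed msep xA wX xw).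
move=> y z /nbhd_AS yAS /nbhd_AS zAS; rewrite /nested.
have [yA|yA] := boolP (y \in A).
  by rewrite (subset_trans (A_cnbhd y yA) (clique_cnbhd ASX AS_clique zAS)).
have [zA|zA] := boolP (z \in A).
  by rewrite (subset_trans (A_cnbhd z zA) (clique_cnbhd ASX AS_clique yAS)) orbT.
have [->|yz] := eqVneq y z; first by rewrite subxx.
by apply: (msep_nested msep AS_clique xA) => //; [move: yAS | move: zAS];
  rewrite inE ?(negbTE yA) ?(negbTE zA).
Qed.

Lemma msep_clique_or_dominant X S A B : minimal_separator e X S A B ->
  clique e (A :|: S) \/
  exists u v, [/\ u \in A, v \in A :|: S, u != v, ~~ e u v & S \subset cnbhd e X v].
Proof.
move=> msep.
have [/existsP [u /existsP [v /and3P [/andP [uA vAS] /andP [uv nuv] Sv]]]|none] :=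
  boolP [exists u, exists v, [&& (u \in A) && (v \in A :|: S), (u != v) && ~~ e u v &
                               S \subset cnbhd e X v]].
  by right; exists u, v.
left.
have dominant u v : u \in A -> v \in A :|: S -> u != v -> S \subset cnbhd e X v -> e u v.
  move=> uA vAS uv Sv; apply/negPn/negP => nuv; case/negP: none.
  by apply/existsP; exists u; apply/existsP; exists v; rewrite uA vAS uv nuv Sv.
have S_dominant s : s \in S -> S \subset cnbhd e X s.
  move=> sS; apply/subsetP => t tS; rewrite in_cnbhd (subsetP (msep_sub msep)) //.
  by have [//|ts] := eqVneq t s; rewrite (msep_clique e_sym e_irr chordal_e msep) // eq_sym.
have A_adj u v : u \in A -> v \in A :|: S -> u != v -> e u v.
  move=> uA vAS uv; have [vS|vS] := boolP (v \in S); first exact: dominant (S_dominant v vS).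
  have vA : v \in A by move: vAS; rewrite inE (negbTE vS) orbF.
  have [Sv|/subsetPn [s sS sv]] := boolP (S \subset cnbhd e X v); first exact: dominant.
  have sAS : s \in A :|: S by rewrite inE sS orbT.
  have vs : v != s by apply: contraNneq sv => <-; exact: cnbhd_id.
  have := dominant v s vA sAS vs (S_dominant s sS).
  by move: sv; rewrite in_cnbhd (subsetP (msep_sub msep)) //= negb_or => /andP [_ /negbTE ->].
move=> y z yAS zAS yz.
have [yA|yA] := boolP (y \in A); first exact: A_adj.
have [zA|zA] := boolP (z \in A); first by rewrite e_sym A_adj // eq_sym.
move: yAS zAS; rewrite !inE (negbTE yA) (negbTE zA) /= => yS zS.
exact: (msep_clique e_sym e_irr chordal_e msep).
Qed.

Lemma msep_component_proper X S A B S' B' u v :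
  minimal_separator e X S A B -> u \in A -> v \in A :|: S -> S \subset cnbhd e X v ->
  minimal_separator e X S' (component e (X :\: S') u) B' -> v \in B' ->
  component e (X :\: S') u \proper A.
Proof.
move=> msep uA vAS Sv msep' vB'; set A' := component e (X :\: S') u.
have vA' : v \notin A' by rewrite (disjointFl (msep_disjoint msep') vB').
have /andP [vX vS'] := msepA_mem (minimal_separator_sym msep') vB'.
have vY : v \in X :\: S' by rewrite inE vS' vX.
have A'A : A' \subset A.
  apply/subsetP => y; rewrite inE; apply: (linked_ind (P := fun z => z \in A)) => //.
  move=> y0 z y0A uy0 y0Y zY y0z; have uz := linked_step uy0 y0Y zY y0z.
  have zX : z \in X by case/setDP: zY.
  have := msepA_closed msep y0A zX y0z; rewrite inE => /orP [//|zS].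
  case/negP: vA'; rewrite inE.
  have := subsetP Sv z zS; rewrite in_cnbhd => /predU1P [<- //|/andP [_ vz]].
  by apply: linked_step uz zY vY _; rewrite e_sym.
rewrite properE A'A /=; apply/subsetPn.
have [vA|vA] := boolP (v \in A); first by exists v.
have vS : v \in S by move: vAS; rewrite inE (negbTE vA).
have [a aA va] := msepA_full msep vS; exists a => //; apply/negP => aA'.
have := msepA_closed msep' aA' vX; rewrite e_sym va => /(_ isT).
by rewrite inE (negbTE vA') (negbTE vS').
Qed.

(* If [A :|: S] is not a clique, a minimal separator between some [u] in [A] and a vertex
   adjacent to all of [S] has a full component strictly inside [A]. *)
Lemma msep_has_simple X S A B u : minimal_separator e X S A B -> u \in A ->
  exists2 x, x \in A & simple e X x.
Proof.
move: {2}#|A| (leqnn #|A|) => n; elim: n S A B u => [|n IH] S A B u A_le msep uA.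
  by move: A_le; rewrite leqn0 => /eqP /cards0_eq A0; rewrite A0 inE in uA.
have [AS_clique|[u' [v [u'A vAS u'v nu'v Sv]]]] := msep_clique_or_dominant msep.
  by exists u => //; apply: msep_simple_of_clique msep AS_clique uA.
have /andP [u'X _] := msepA_mem msep u'A.
have vX : v \in X := subsetP (msep_AS_sub msep) v vAS.
have [S' msep'] := exists_minimal_separator e_sym u'X vX u'v nu'v.
have vB' : v \in component e (X :\: S') v by rewrite inE; exact: connect0.
have A'A := msep_component_proper msep u'A vAS Sv msep' vB'.
have [||x xA' x_simple] := IH _ _ _ u' _ msep'.
- by move: (proper_card A'A) A_le; lia.
- by rewrite inE; exact: connect0.
by exists x => //; apply: subsetP (proper_sub A'A) x xA'.
Qed.

Lemma exists_simple X : X != set0 -> exists2 x, x \in X & simple e X x.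
Proof.
case/set0Pn => x xX.
have [/existsP [u /existsP [v /and4P [uX vX uv nuv]]]|X_clique] :=
  boolP [exists u, exists v, [&& u \in X, v \in X, u != v & ~~ e u v]].
  have [S msep] := exists_minimal_separator e_sym uX vX uv nuv.
  have [|y yA y_simple] := msep_has_simple msep (u := u); first by rewrite inE; exact: connect0.
  by exists y => //; move: yA; apply/subsetP/(subset_trans (msepA_sub msep))/subsetDl.
have cnbhdX y : y \in X -> cnbhd e X y = X.
  move=> yX; apply/setP => w; rewrite in_cnbhd.
  have [->|wy] := eqVneq w y; first by rewrite yX.
  have [wX|//] := boolP (w \in X); apply/negPn/negP => nyw; case/negP: X_clique.
  by apply/existsP; exists y; apply/existsP; exists w; rewrite yX wX eq_sym wy nyw.
exists x => // y z; rewrite !in_nbhd => /andP [yX _] /andP [zX _].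
by rewrite /nested !cnbhdX // subxx.
Qed.

End SimpleVertices.

Section SimpleOrderings.
Variables (T : finType) (e : rel T).
Hypothesis e_sym : symmetric e.
Implicit Types (X Y : {set T}) (R : rel T) (s : seq T).

Lemma cnbhd_restrict X Y a b : Y \subset X -> a \in Y -> b \in Y ->
  cnbhd e X a \subset cnbhd e X b -> cnbhd e Y a \subset cnbhd e Y b.
Proof.
move=> YX aY bY /subsetP ab; apply/subsetP => w; rewrite !in_cnbhd.
case/predU1P => [->|/andP [wY aw]].
  move: (ab a (cnbhd_id e X a)); rewrite in_cnbhd aY.
  by case/predU1P => [->|/andP [_ ->]]; rewrite ?eqxx ?orbT.
have := ab w; rewrite !in_cnbhd (subsetP YX) // aw orbT => /(_ isT) /predU1P [->|/andP [_ ->]].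
  by rewrite eqxx.
by rewrite wY orbT.
Qed.

Lemma simple_cnbhd_sub X x y : x \in X -> simple e X x -> y \in cnbhd e X x ->
  cnbhd e X x \subset cnbhd e X y.
Proof.
move=> xX x_simple; rewrite in_cnbhd => /predU1P [->|/andP [yX xy]]; first exact: subxx.
apply/subsetP => w; rewrite !in_cnbhd => /predU1P [->|/andP [wX xw]].
  by rewrite xX e_sym xy orbT.
have [//|wy] := eqVneq w y; rewrite wX /=.
by apply: (simple_simplicial e_sym x_simple); rewrite ?in_nbhd ?yX ?wX // eq_sym.
Qed.

Lemma twin_simple X x u : x \in X -> simple e X x -> cnbhd e X u = cnbhd e X x -> simple e X u.
Proof.
move=> xX x_simple ux.
have nbhd_u y : y \in nbhd e X u -> y = x \/ y \in nbhd e X x.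
  by move=> uy; apply/setU1P; rewrite -/(cnbhd e X x) -ux inE uy orbT.
have x_sub y : y \in nbhd e X x -> cnbhd e X x \subset cnbhd e X y.
  by move=> xy; apply: simple_cnbhd_sub; rewrite // inE xy orbT.
move=> y z /nbhd_u [->|xy] /nbhd_u [->|xz]; rewrite /nested ?subxx ?x_sub ?orbT //.
exact: x_simple.
Qed.

(* [R u w] records that [u] must be eliminated before [w]; this is only consistent when
   [u]'s closed neighbourhood is contained in [w]'s. *)
Definition precedence X R :=
  [/\ forall u, u \in X -> ~~ R u u,
      forall u v w, u \in X -> v \in X -> w \in X -> R u v -> R v w -> R u w &
      forall u w, u \in X -> w \in X -> R u w -> cnbhd e X u \subset cnbhd e X w].

Hypothesis simple_exists : forall X, X != set0 -> exists2 x, x \in X & simple e X x.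

(* Among the twins of a simple vertex, one with the fewest [R]-predecessors has none. *)
Lemma simple_source X R : X != set0 -> precedence X R ->
  exists x, [/\ x \in X, simple e X x & forall v, v \in X -> ~~ R v x].
Proof.
move=> X_neq0 [R_irr R_trans R_sub]; have [x0 x0X x0_simple] := simple_exists X_neq0.
pose twins := [set u in X | cnbhd e X u == cnbhd e X x0].
pose preds u := [set v in twins | R v u].
have x0_twin : x0 \in twins by rewrite inE x0X eqxx.
case: (@arg_minnP _ x0 (fun u => u \in twins) (fun u => #|preds u|) x0_twin) => u.
rewrite inE => /andP [uX /eqP ux0] u_min.
have u_simple := twin_simple x0X x0_simple ux0.
exists u; split=> // v vX; apply/negP => vu.
have v_twin : v \in twins.
  rewrite inE vX -ux0 eqEsubset R_sub //= simple_cnbhd_sub //.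
  by apply: subsetP (R_sub v u vX uX vu) v (cnbhd_id e X v).
have := u_min v v_twin; rewrite leqNgt => /negP; apply; apply: proper_card.
rewrite properE; apply/andP; split.
  apply/subsetP => w; rewrite !inE => /andP [/andP [wX wx0] wv].
  by rewrite wX wx0 (R_trans w v u).
apply/subsetPn; exists v; first by rewrite inE v_twin.
by rewrite inE (negbTE (R_irr v vX)) andbF.
Qed.

Definition strong_elim_on X s :=
  [/\ uniq s, s =i X,
      (forall vi vj vk, index vi s < index vj s -> index vi s < index vk s ->
         adj_in e X vi vj -> adj_in e X vi vk -> vj != vk -> e vj vk) &
      (forall vi vj vk vl,
         index vi s < index vk s -> index vk s < index vl s -> index vi s < index vj s ->
         adj_in e X vi vk -> adj_in e X vk vj -> adj_in e X vi vl -> vj != vl -> e vj vl)].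

Definition respects X R s := forall u w, u \in X -> w \in X -> R u w -> index u s < index w s.

(* Once [x] is eliminated, two of its neighbours must appear in the order of inclusion of their
   closed neighbourhoods in the remaining graph, so strict inclusions become precedences. *)
Definition add_strict X R : rel T := fun u w => R u w || (cnbhd e X u \proper cnbhd e X w).

Lemma precedence_add_strict X R x : x \in X -> precedence X R ->
  precedence (X :\ x) (add_strict (X :\ x) R).
Proof.
move=> xX [R_irr R_trans R_sub]; have X'X : X :\ x \subset X by apply: subsetDl.
have R_sub' u w : u \in X :\ x -> w \in X :\ x -> R u w ->
    cnbhd e (X :\ x) u \subset cnbhd e (X :\ x) w.
  by move=> uX' wX' uw; apply: (cnbhd_restrict X'X uX' wX'); rewrite R_sub ?(subsetP X'X).
split=> [u uX'|u v w uX' vX' wX'|u w uX' wX'].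
- by rewrite /add_strict negb_or R_irr ?(subsetP X'X) //= properE subxx.
- rewrite /add_strict => /orP [uv|uv] /orP [vw|vw].
  + by rewrite (R_trans u v w) ?(subsetP X'X).
  + by rewrite (sub_proper_trans (R_sub' u v _ _ uv)) ?orbT.
  + by rewrite (proper_sub_trans uv (R_sub' v w _ _ vw)) ?orbT.
  + by rewrite (proper_trans uv vw) orbT.
- by rewrite /add_strict => /orP [/(R_sub' u w uX' wX')|/proper_sub].
Qed.

Section Cons.
Variables (X : {set T}) (R : rel T) (x : T) (s : seq T).
Hypotheses (xX : x \in X) (x_simple : simple e X x) (x_source : forall v, v \in X -> ~~ R v x).
Hypotheses (R_prec : precedence X R) (s_strong : strong_elim_on (X :\ x) s).
Hypothesis s_respects : respects (X :\ x) (add_strict (X :\ x) R) s.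

Let index_cons v : v != x -> index v (x :: s) = (index v s).+1.
Proof. by move=> vx; rewrite /= eq_sym (negbTE vx). Qed.

Let later v w : index v (x :: s) < index w (x :: s) -> w != x.
Proof. by apply: contraTneq => ->; rewrite /= eqxx. Qed.

Let adj_in_delete v w : v != x -> w != x -> adj_in e X v w = adj_in e (X :\ x) v w.
Proof. by move=> vx wx; rewrite /adj_in !inE vx wx. Qed.

Lemma strong_elim_on_cons : strong_elim_on X (x :: s).
Proof.
case: s_strong => s_uniq s_X s_peo s_strong'.
split=> [|v|vi vj vk ij ik|vi vj vk vl ik kl ij].
- by rewrite /= s_X !inE eqxx s_uniq.
- by rewrite in_cons s_X !inE; case: eqVneq => [->|].
- have [-> /and3P [_ jX xj] /and3P [_ kX xk] jk|ix] := eqVneq vi x.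
    by apply: (simple_simplicial e_sym x_simple); rewrite ?in_nbhd ?jX ?kX.
  have [jx kx] := (later ij, later ik).
  move: ij ik; rewrite !index_cons // !ltnS !adj_in_delete //; exact: s_peo.
have kx := later ik; have lx := later kl; have jx := later ij.
have [-> /and3P [_ kX xk] /and3P [_ jX kj] /and3P [_ lX xl] jl|ix] := eqVneq vi x; last first.
  move: ik kl ij; rewrite !index_cons // !ltnS !adj_in_delete //; exact: s_strong'.
have [kX' lX' jX'] : [/\ vk \in X :\ x, vl \in X :\ x & vj \in X :\ x] by rewrite !inE kx lx jx.
have X'X : X :\ x \subset X by apply: subsetDl.
have k_sub_l : cnbhd e (X :\ x) vk \subset cnbhd e (X :\ x) vl.
  have [kn ln] : vk \in nbhd e X x /\ vl \in nbhd e X x by rewrite !in_nbhd kX lX.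
  case/orP: (x_simple kn ln) => [kl_sub|lk_sub]; first exact: cnbhd_restrict kl_sub.
  have lk_sub' := cnbhd_restrict X'X lX' kX' lk_sub.
  have [lk_proper|] := boolP (cnbhd e (X :\ x) vl \proper cnbhd e (X :\ x) vk).
    have := s_respects lX' kX'; rewrite /add_strict lk_proper orbT => /(_ isT).
    by move: kl; rewrite !index_cons // ltnS => kl /(ltn_trans kl); rewrite ltnn.
  by rewrite properE lk_sub' negbK.
have := subsetP k_sub_l vj; rewrite !in_cnbhd jX' kj orbT => /(_ isT) /predU1P [jl'|lj].
  by rewrite jl' eqxx in jl.
by rewrite e_sym.
Qed.

Lemma respects_cons : respects X R (x :: s).
Proof.
case: R_prec => R_irr _ _ u w uX wX uw.
have [ux|ux] := eqVneq u x.
  have wx : w != x by apply: contraTneq uw => ->; rewrite ux R_irr.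
  by rewrite ux (index_cons wx) /= eqxx.
have wx : w != x by apply: contraTneq uw => ->; rewrite x_source.
by rewrite !index_cons // ltnS s_respects ?inE ?ux ?wx // /add_strict uw.
Qed.

End Cons.

Lemma strong_elim_on_exists X R : precedence X R -> exists2 s, strong_elim_on X s & respects X R s.
Proof.
move: {2}#|X| (leqnn #|X|) => n; elim: n X R => [|n IH] X R X_le R_prec;
  (have [->|X_neq0] := eqVneq X set0;
   first by exists [::] => [|u w]; [split=> // v | ]; rewrite inE).
  by move: X_neq0; rewrite -card_gt0 ltnNge X_le.
have [x [xX x_simple x_source]] := simple_source X_neq0 R_prec.
have [|s s_strong s_respects] :=
  IH (X :\ x) (add_strict (X :\ x) R) _ (precedence_add_strict xX R_prec).
  by move: X_le; rewrite (cardsD1 x X) xX add1n ltnS.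
exists (x :: s).
- exact: (strong_elim_on_cons xX x_simple s_strong s_respects).
- exact: (respects_cons xX x_source R_prec s_respects).
Qed.

Lemma strongly_chordal_of_simple : strongly_chordal e.
Proof.
have R_prec : precedence setT [rel _ _ | false] by [].
have [s [s_uniq s_all s_peo s_strong] _] := strong_elim_on_exists R_prec.
have adj_inT u v : adj_in e setT u v = e u v by rewrite /adj_in !in_setT.
exists s; split; first split.
- by split=> // v; rewrite s_all in_setT.
- by move=> vi vj vk ij ik eij eik; apply: (s_peo vi); rewrite ?adj_inT.
- by move=> vi vj vk vl ik kl ij eik ekj eil; apply: (s_strong vi _ vk); rewrite ?adj_inT.
Qed.

End SimpleOrderings.

Theorem corollary2p3 (T : finType) (e : rel T) :
  simple_graph e ->
  ((chordal e /\ free_of claw_rel e /\ free_of tent_rel e) <->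
   (strongly_chordal e /\ free_of claw_rel e)).
Proof.
move=> [e_sym e_irr]; split.
- move=> [chordal_e [claw_free tent_free]]; split=> //.
  apply: (strongly_chordal_of_simple e_sym) => X.
  exact: (exists_simple e_sym e_irr chordal_e claw_free tent_free).
- move=> [[s strong] claw_free]; split; [|split] => //.
  + exact: peo_chordal strong.1.
  + exact: strong_elim_tent_free strong.
Qed.
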